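(* Every monomial ideal of $\mathcal{A}$ is finitely generated.
   Context: Let $\mathbf{k}$ be a commutative noetherian ring, $r$ a positive integer, $x_1,\dots,x_r$ the standard basis of $\mathbf{k}^r$, and $\mathcal{A}=\bigoplus_{n,d\ge0}(\mathrm{Sym}^d\mathbf{k}^r)^{\otimes n}$, bigraded by $(d,n)$. For a split $\sigma$ of $[n+m]$ (subset $\{i_1<\cdots<i_n\}$ and complement $\{j_1<\cdots<j_m\}$), $\cdot_\sigma:(\mathrm{Sym}^d\mathbf{k}^r)^{\otimes n}\otimes(\mathrm{Sym}^d\mathbf{k}^r)^{\otimes m}\to(\mathrm{Sym}^d\mathbf{k}^r)^{\otimes(n+m)}$ places the first argument's factors in positions $i_k$ and the second's in positions $j_k$; it is $0$ on other bidegrees. $*:(\mathrm{Sym}^d\mathbf{k}^r)^{\otimes n}\otimes(\mathrm{Sym}^e\mathbf{k}^r)^{\otimes n}\to(\mathrm{Sym}^{d+e}\mathbf{k}^r)^{\otimes n}$ is factorwise multiplication, $0$ on other bidegrees. An ideal is a bihomogeneous subspace $I$ with $g*f,\ g\cdot_\sigma f\in I$ for all $f\in I$, $g\in\mathcal{A}$, splits $\sigma$; the ideal generated by a set is the smallest ideal containing it. A monomial is $w_1\otimes\cdots\otimes w_n$ with each $w_i$ a scalar multiple of a monomial in $x_1,\dots,x_r$; a monomial ideal is an ideal generated by monomials. *)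

From mathcomp Require Import all_boot all_algebra.
From Stdlib Require List.
Set Implicit Arguments. Unset Strict Implicit. Unset Printing Implicit Defensive.
Import GRing.Theory.
Local Open Scope ring_scope.

Definition ring_ideal (k : comPzRingType) (J : k -> Prop) : Prop :=
  [/\ J 0, (forall x y, J x -> J y -> J (x + y)) & (forall c x, J x -> J (c * x))].

Definition noetherian (k : comPzRingType) : Prop :=
  forall J : k -> Prop, ring_ideal J ->
    exists s : seq k, forall x, J x <->
      exists c : 'I_(size s) -> k, x = \sum_(i < size s) c i * s`_i.

(* Monomials of degree d in x_1..x_r, as exponent vectors. These form the
   standard basis of Sym^d k^r. *)
Definition mon (r d : nat) : Type :=
  {a : {ffun 'I_r -> 'I_d.+1} | \sum_(j < r) (a j : nat) == d}.

(* Standard basis of (Sym^d k^r)^{(x) n}: n-tuples of degree-d monomials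
   (w_1 (x) ... (x) w_n). *)
Definition basis (r d n : nat) : finType := {ffun 'I_n -> mon r d}.

(* The bihomogeneous component (Sym^d k^r)^{(x) n} of A, identified with
   the free k-module on [basis r d n] (coefficient functions). *)
Definition comp (k : comPzRingType) (r d n : nat) := {ffun basis r d n -> k}.

Definition cscale (k : comPzRingType) r d n (c : k) (F : comp k r d n)
  : comp k r d n := [ffun w => c * F w].

(* Split sigma of [n+m] given by i_1<..<i_n (ifun) and j_1<..<j_m (jfun):
   strictly increasing maps with disjoint images. *)
Definition is_split (n m : nat) (ifun : 'I_n -> 'I_(n + m))
  (jfun : 'I_m -> 'I_(n + m)) : Prop :=
  [/\ (forall a b : 'I_n, (a < b)%N -> (ifun a < ifun b)%N),
      (forall a b : 'I_m, (a < b)%N -> (jfun a < jfun b)%N) &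
      (forall a b, ifun a != jfun b)].

(* g ._sigma f : factors of g go to positions i_k, those of f to j_k.
   On coefficients: the coefficient of the basis tensor w is
   G(w o i) * F(w o j). *)
Definition split_mul (k : comPzRingType) r d n m
  (ifun : 'I_n -> 'I_(n + m)) (jfun : 'I_m -> 'I_(n + m))
  (G : comp k r d n) (F : comp k r d m) : comp k r d (n + m) :=
  [ffun w : basis r d (n + m) =>
     G [ffun a => w (ifun a)] * F [ffun b => w (jfun b)]].

(* Factorwise multiplication g * f : (d,n) x (e,n) -> (d+e,n). *)
Definition star_mul (k : comPzRingType) r d e n
  (G : comp k r d n) (F : comp k r e n) : comp k r (d + e) n :=
  [ffun w : basis r (d + e) n =>
     \sum_(t : basis r d n) \sum_(u : basis r e n)
       (if [forall a, forall j, (val (w a) j : nat) == (val (t a) j : nat) + (val (u a) j : nat)]%N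
        then G t * F u else 0)].

(* A bihomogeneous subspace of A is given by its family of components. *)
Definition bisubset (k : comPzRingType) (r : nat) :=
  forall d n : nat, comp k r d n -> Prop.

Definition subset_of k r (X Y : bisubset k r) : Prop :=
  forall d n F, X d n F -> Y d n F.

Definition is_ideal (k : comPzRingType) (r : nat) (I : bisubset k r) : Prop :=
  [/\
      (forall d n, I d n 0),
      (forall d n F G, I d n F -> I d n G -> I d n (F + G)),
      (forall d n c F, I d n F -> I d n (cscale c F)),
      (forall d e n (G : comp k r e n) (F : comp k r d n),
          I d n F -> I (e + d)%N n (star_mul G F)) &
      (forall d n m ifun jfun (G : comp k r d n) (F : comp k r d m),
          is_split ifun jfun -> I d m F -> I d (n + m)%N (split_mul ifun jfun G F))].

Definition generated_by k r (X I : bisubset k r) : Prop :=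
  [/\ is_ideal I, subset_of X I &
      forall J, is_ideal J -> subset_of X J -> subset_of I J].

Definition is_monomial k r d n (F : comp k r d n) : Prop :=
  exists (c : k) (t : basis r d n), F = [ffun w => if w == t then c else 0].

Definition monomial_ideal k r (I : bisubset k r) : Prop :=
  exists X : bisubset k r,
    (forall d n F, X d n F -> is_monomial F) /\ generated_by X I.

Definition of_seq k r (s : seq {d : nat & {n : nat & comp k r d n}})
  : bisubset k r :=
  fun d n F => Stdlib.Lists.List.In (existT _ d (existT _ n F)) s.

Definition finitely_generated k r (I : bisubset k r) : Prop :=
  exists s, generated_by (of_seq s) I.

(* Call a basis tensor t a divisor of w if w arises from t by multiplying all
   factors by monomials of a common degree (the product g * _) and then inserting
   further factors (the products g ._sigma _); every ideal containing c t then
   contains c w.  Divisibility is a well-quasi-order: it combines the order on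
   degrees with Higman's embedding order on words over N^r, ordered by Dickson's
   lemma.  The ideal generated by a set S of monomials consists of the F such that
   every coefficient F w is a k-linear combination of the coefficients of the
   members of S dividing w.  Some finite subset of S generates the same ideal:
   otherwise there are c_0 t_0, c_1 t_1, ... in S with c_n not covered by the
   coefficients of those t_i, i < n, dividing t_n; the t_n have a subsequence
   forming a divisibility chain, along which the coefficients must stabilize
   because k is noetherian. *)

From mathcomp Require Import all_boot all_algebra.
From Stdlib Require Import Classical ClassicalEpsilon.
Set Implicit Arguments. Unset Strict Implicit. Unset Printing Implicit Defensive.
Import GRing.Theory.

Lemma ex_minn_prop (P : nat -> Prop) :
  (exists n, P n) -> exists2 m, P m & forall n, P n -> m <= n.
Proof.
pose p n : bool := excluded_middle_informative (P n).
have pP n : p n <-> P n by rewrite /p; case: excluded_middle_informative.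
move=> [n /pP pn]; case: (ex_minnP (ex_intro p n pn)) => m /pP Pm minm.
by exists m => // q /pP /minm.
Qed.

Lemma greedy_seq (T : Type) (Q : seq T -> T -> Prop) :
  (forall s, exists x, Q s x) -> exists p : nat -> T, forall n, Q (mkseq p n) (p n).
Proof.
move=> /choice [next next_Q].
pose pre n := iter n (fun s => rcons s (next s)) [::].
exists (fun n => next (pre n)) => n.
suff -> : mkseq (fun n => next (pre n)) n = pre n by [].
by elim: n => // n IH; rewrite mkseqS IH.
Qed.

Lemma In_rcons (T : Type) (s : seq T) y x :
  List.In x (rcons s y) <-> List.In x s \/ y = x.
Proof. by elim: s => [|z s IH] /=; tauto. Qed.

Lemma In_mkseq (T : Type) (p : nat -> T) n x :
  List.In x (mkseq p n) <-> exists2 i, i < n & x = p i.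
Proof.
elim: n => [|n IH]; first by split=> [[]|[]].
rewrite mkseqS In_rcons IH; split=> [[[i ilt ->] | <-] | [i]].
- by exists i => //; apply: ltnW.
- by exists n.
by rewrite ltnS leq_eqVlt => /orP [/eqP -> -> | ilt ->]; [right | left; exists i].
Qed.

Lemma subseq_increasing m n (f : 'I_m -> 'I_n) :
  {homo f : a b / a < b} -> subseq (map f (enum 'I_m)) (enum 'I_n).
Proof.
move=> f_incr; pose lt := relpre (val : 'I_n -> nat) ltn.
have lt_trans : transitive lt by move=> ???; apply: ltn_trans.
have ord_sorted p : sorted (relpre (val : 'I_p -> nat) ltn) (enum 'I_p).
  by rewrite -sorted_map val_enum_ord iota_ltn_sorted.
set s := map f _; suff -> : s = [seq x <- enum 'I_n | x \in s] by apply: filter_subseq.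
apply: (@irr_sorted_eq _ lt) => //.
- by move=> x; rewrite /lt /= ltnn.
- by rewrite sorted_map; apply: sub_sorted (ord_sorted m) => a b; apply: f_incr.
- exact: sorted_filter (ord_sorted n).
- by move=> x; rewrite mem_filter mem_enum andbT.
Qed.

Lemma subseq_drop_nth (T : eqType) (s u : seq T) : subseq s u -> size s < size u ->
  exists2 i, i < size u & subseq s (take i u ++ drop i.+1 u).
Proof.
elim: u s => [|x u IH] [|y s] //= sub lt; first by exists 0; rewrite ?sub0seq.
move: sub; case: eqP => [-> sub | _ sub]; last by exists 0; rewrite //= drop0.
by have [i iu subi] := IH s sub lt; exists i.+1; rewrite //= eqxx.
Qed.

Lemma enum_lift n (p : 'I_n.+1) :
  map (lift p) (enum 'I_n) = take p (enum 'I_n.+1) ++ drop p.+1 (enum 'I_n.+1).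
Proof.
apply: (inj_map val_inj); rewrite map_cat map_take map_drop -map_comp.
rewrite (eq_map (_ : val \o lift p =1 bump p \o val)) // map_comp !val_enum_ord.
rewrite take_iota drop_iota (minn_idPl (ltnW (ltn_ord p))) subSS add0n.
rewrite [iota 0 n](_ : _ = iota 0 p ++ iota p (n - p)).
  2: by rewrite -iotaD subnKC // -ltnS.
rewrite map_cat; congr (_ ++ _).
  by apply: map_id_in => i; rewrite mem_iota => /andP [_ ip]; rewrite /bump leqNgt ip.
have shift m q : iota m q = map (addn m) (iota 0 q) by rewrite -iotaDl addn0.
rewrite [iota p _]shift [iota p.+1 _]shift -map_comp.
by apply/eq_map => i; rewrite /= /bump leq_addr.
Qed.

Lemma codom_lift (T : Type) n (w : 'I_n.+1 -> T) (p : 'I_n.+1) :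
  codom (w \o lift p) = take p (codom w) ++ drop p.+1 (codom w).
Proof. by rewrite !codomE map_comp enum_lift map_cat map_take map_drop. Qed.

(** * Well-quasi-orders and Higman's lemma *)

Section WellQuasiOrders.
Variable T : Type.
Implicit Types R : T -> T -> Prop.

Definition wqo R := forall f : nat -> T, exists i j, i < j /\ R (f i) (f j).

Definition ptransitive R := forall y x z, R x y -> R y z -> R x z.

Lemma wqo_chain R : wqo R -> ptransitive R -> forall f : nat -> T,
  exists2 phi : nat -> nat, (forall i, phi i < phi i.+1) &
    forall i j, i < j -> R (f (phi i)) (f (phi j)).
Proof.
move=> wR tR f; pose extendable i := exists2 j, i < j & R (f i) (f j).
have [N extN] : exists N, forall i, N <= i -> extendable i.
  apply: NNPP => noN.
  have /choice [t t_dead] : forall N, exists i, N <= i /\ ~ extendable i.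
    move=> N; apply: NNPP => H; apply: noN; exists N => i Ni.
    by apply: NNPP => ni; apply: H; exists i.
  pose h n := iter n (fun m => t m.+1) (t 0).
  have h_dead n : ~ extendable (h n).
    by case: n => [|n]; [case: (t_dead 0) | case: (t_dead (h n).+1)].
  have h_incr : {homo h : i j / i < j}.
    by apply: (homo_ltn ltn_trans) => n; case: (t_dead (h n).+1).
  have [i [j [ij Rij]]] := wR (f \o h).
  by apply: (h_dead i); exists (h j) => //; apply: h_incr.
have /choice [g g_step] : forall i, exists j, N <= i -> i < j /\ R (f i) (f j).
  move=> i; case: (leqP N i) => [/extN [j ij Rij] | _]; last by exists 0.
  by exists j.
pose phi n := iter n g N.
have phi_ge n : N <= phi n.
  by elim: n => //= n IH; case: (g_step _ IH) => /ltnW/(leq_trans IH).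
exists phi => [n | i j]; first by case: (g_step _ (phi_ge n)).
move=> ij; apply: (homo_ltn (f := f \o phi)) ij => [y x z|n]; first exact: tR.
by case: (g_step _ (phi_ge n)).
Qed.

Lemma wqo_and R1 R2 : wqo R1 -> ptransitive R1 -> wqo R2 ->
  wqo (fun a b => R1 a b /\ R2 a b).
Proof.
move=> w1 t1 w2 f; have [phi phi_incr R1_phi] := wqo_chain w1 t1 f.
have [i [j [ij R2ij]]] := w2 (f \o phi).
exists (phi i), (phi j); split; first exact: (homo_ltn ltn_trans phi_incr ij).
by split; first exact: R1_phi.
Qed.

Lemma sub_wqo R1 R2 : (forall a b, R1 a b -> R2 a b) -> wqo R1 -> wqo R2.
Proof. by move=> sR w f; have [i [j [ij /sR]]] := w f; exists i, j. Qed.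

End WellQuasiOrders.

Lemma wqo_preim (T U : Type) (R : U -> U -> Prop) (h : T -> U) :
  wqo R -> wqo (fun a b => R (h a) (h b)).
Proof. by move=> w f; apply: w (h \o f). Qed.

Lemma wqo_leq : wqo (fun m n : nat => m <= n).
Proof.
move=> f; have im_f : exists m, exists i, f i = m by exists (f 0), 0.
have [_ [i <-] min_fi] := ex_minn_prop im_f.
by exists i, i.+1; split=> //; apply: min_fi; exists i.+1.
Qed.

Lemma wqo_leq_on (J : eqType) (s : seq J) :
  wqo (fun a b : J -> nat => {in s, forall j, a j <= b j}).
Proof.
elim: s => [|j0 s IH]; first by move=> f; exists 0, 1.
apply: (sub_wqo (R1 := fun a b => a j0 <= b j0 /\ {in s, forall j, a j <= b j})).
  by move=> a b [le0 le] j; rewrite inE => /predU1P [-> | /le].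
apply: wqo_and IH; first exact: (wqo_preim (fun a => a j0) wqo_leq).
by move=> y x z; apply: leq_trans.
Qed.

Section Higman.
Variables (T : Type) (R : T -> T -> Prop).

Inductive emb : seq T -> seq T -> Prop :=
| emb_nil t : emb [::] t
| emb_skip s b t : emb s t -> emb s (b :: t)
| emb_cons a b s t : R a b -> emb s t -> emb (a :: s) (b :: t).

Lemma emb_behead a s t : emb (a :: s) t -> emb s t.
Proof.
elim: t => [|b t IH] E; inversion E; subst; apply: emb_skip => //.
exact: IH.
Qed.

Lemma emb_trans : ptransitive R -> ptransitive emb.
Proof.
move=> tR y x z E; elim: E z => [t|s b t _ IH|a b s t Rab _ IH] z E2.
- exact: emb_nil.
- exact/IH/(emb_behead E2).
- elim: z E2 => [|c z IHz] E2; inversion E2; subst; first exact/emb_skip/IHz.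
  by apply: emb_cons; [exact: tR Rab _ | exact: IH].
Qed.

Definition bad (f : nat -> seq T) := forall i j, i < j -> ~ emb (f i) (f j).

Lemma minimal_bad_seq f0 : bad f0 -> exists2 g, bad g &
  forall n f, bad f -> mkseq f n = mkseq g n -> size (g n) <= size (f n).
Proof.
move=> bad_f0; pose extends s := exists2 f, bad f & mkseq f (size s) = s.
pose minimal s w := (exists w', extends (rcons s w')) ->
  extends (rcons s w) /\ forall w', extends (rcons s w') -> size w <= size w'.
have [g g_min] : exists g : nat -> seq T, forall n, minimal (mkseq g n) (g n).
  apply: greedy_seq => s; case: (classic (exists w', extends (rcons s w'))); last first.
    by exists [::].
  case=> w' ext'; have [_ [w ext <-] min_w] :=
    ex_minn_prop (ex_intro (fun m => exists2 w, extends (rcons s w) & size w = m) _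
                           (ex_intro2 _ _ w' ext' erefl)).
  by exists w => _; split=> // v ext_v; apply: min_w; exists v.
have ext_step n f : bad f -> mkseq f n = mkseq g n -> extends (rcons (mkseq g n) (f n)).
  by move=> bad_f fE; exists f; rewrite // size_rcons size_mkseq mkseqS fE.
have g_ext n : extends (mkseq g n).
  elim: n => [|n [f bad_f]]; first by exists f0.
  rewrite size_mkseq => /(ext_step n f bad_f) ext; rewrite mkseqS.
  by case: (g_min n (ex_intro _ (f n) ext)).
exists g => [i j ij | n f bad_f /(ext_step n f bad_f) ext].
  have [f bad_f] := g_ext j.+1; rewrite size_mkseq => fE.
  have gf m : m <= j -> g m = f m.
    by move=> mj; rewrite -(nth_mkseq [::] g (mj : m < j.+1)) -fE nth_mkseq.
  by rewrite !gf ?(ltnW ij) //; apply: bad_f.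
by have [_ /(_ _ ext)] := g_min n (ex_intro _ (f n) ext).
Qed.

Theorem higman : wqo R -> ptransitive R -> wqo emb.
Proof.
move=> wR tR f0; apply: NNPP => not_good.
have [g bad_g g_min] : exists2 g, bad g & forall n f, bad f ->
    mkseq f n = mkseq g n -> size (g n) <= size (f n).
  by apply: (minimal_bad_seq (f0 := f0)) => i j ij E; apply: not_good; exists i, j.
have [a [t gE]] : exists a t, forall n, g n = a n :: t n.
  have g_cons n : exists x, exists s, g n = x :: s.
    case E: (g n) => [|x s]; last by exists x, s.
    by case: (bad_g n n.+1) => //; rewrite E; apply: emb_nil.
  by have /choice [a /choice [t gE]] := g_cons; exists a, t.
have [phi phi_incr Rphi] := wqo_chain wR tR a.
have phi_mono := homo_ltn ltn_trans phi_incr.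
pose p := phi 0; pose h m := if m < p then g m else t (phi (m - p)).
have bad_h : bad h.
  have phi_ge m : p <= phi m by case: m => // m; exact/ltnW/phi_mono.
  move=> i j ij; rewrite /h; case: (ltnP j p) => jp.
    by rewrite (ltn_trans ij jp); apply: bad_g.
  case: (ltnP i p) => ip E.
    apply: (bad_g i (phi (j - p))); first exact: leq_trans ip (phi_ge _).
    by rewrite [g (phi _)]gE; apply: emb_skip.
  have ij_p : i - p < j - p by rewrite ltn_sub2r // (leq_ltn_trans ip).
  apply: (bad_g (phi (i - p)) (phi (j - p))); first exact: phi_mono.
  by rewrite !gE; apply: emb_cons => //; apply: Rphi.
have hp : mkseq h p = mkseq g p.
  by apply/eq_in_map => m; rewrite mem_iota /h => /andP [_ ->].
by have := g_min p h bad_h hp; rewrite gE /h ltnn subnn ltnn.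
Qed.

End Higman.

Section EmbeddingFacts.
Variables (A C : Type) (R : C -> C -> Prop).

Lemma emb_map2 (f g : A -> C) s :
  (forall x, R (f x) (g x)) -> emb R (map f s) (map g s).
Proof. by move=> fg; elim: s => [|x s IH]; [exact: emb_nil | exact: emb_cons]. Qed.

Lemma emb_map_subseq (D : eqType) (h : D -> C) s1 s2 :
  (forall x, R x x) -> subseq s1 s2 -> emb R (map h s1) (map h s2).
Proof.
move=> Rr; elim: s2 s1 => [|y s2 IH] [|x s1] //= sub; try exact: emb_nil.
move: sub; case: eqP => [-> | _] sub; first by apply: emb_cons; [apply: Rr | apply: IH].
exact/emb_skip/(IH (x :: s1)).
Qed.

Lemma emb_map_inv (D : eqType) (f : A -> C) (g : D -> C) s u :
  emb R (map f s) (map g u) -> exists2 s', subseq s' u & size s' = size s /\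
     forall i x0 y0, i < size s -> R (f (nth x0 s i)) (g (nth y0 s' i)).
Proof.
elim: u s => [|b u IH] [|a s] E; try by exists [::]; rewrite ?sub0seq.
  by inversion E.
inversion E as [| ? ? ? E' | ? ? ? ? Rab E']; subst.
  have [s' sub s'E] := IH (a :: s) E'.
  by exists s' => //; apply: (subseq_trans sub); apply: subseq_cons.
have [s' sub [size_s' Rs']] := IH s E'.
exists (b :: s'); first by rewrite /= eqxx.
by split; [rewrite /= size_s' | case=> [|i] x0 y0 //= /Rs'].
Qed.

End EmbeddingFacts.

(** * Divisibility of basis tensors *)

Section Divisibility.
Variable r : nat.

Definition mexp d (a : mon r d) (j : 'I_r) : nat := val a j.

Definition mle (a b : 'I_r -> nat) : Prop := forall j, a j <= b j.

Definition word d n (t : basis r d n) : seq ('I_r -> nat) :=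
  [seq mexp (t i) | i <- enum 'I_n].

Definition divides d n d' n' (t : basis r d n) (w : basis r d' n') : Prop :=
  d <= d' /\ emb mle (word t) (word w).

Lemma mle_trans : ptransitive mle.
Proof. by move=> b a c ab bc j; apply: leq_trans (ab j) (bc j). Qed.

Lemma wqo_mle : wqo mle.
Proof.
by apply: sub_wqo (wqo_leq_on (enum 'I_r)) => a b le j; apply: le; rewrite mem_enum.
Qed.

Lemma divides_trans d n d' n' d'' n'' (t : basis r d n) (u : basis r d' n')
  (w : basis r d'' n'') : divides t u -> divides u w -> divides t w.
Proof.
move=> [dd1 e1] [dd2 e2]; split; first exact: leq_trans dd1 dd2.
exact: emb_trans mle_trans _ _ _ e1 e2.
Qed.

Lemma mexp_sum d (a : mon r d) : \sum_j mexp a j = d.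
Proof. by case: a => f fP; apply/eqP. Qed.

Lemma basis_ext d n (x y : basis r d n) :
  (forall i j, mexp (x i) j = mexp (y i) j) -> x = y.
Proof.
by move=> xy; apply/ffunP => i; apply: val_inj; apply/ffunP => j; apply: val_inj; apply: xy.
Qed.

Lemma word_codom d n (w : basis r d n) : word w = map (@mexp d) (codom w).
Proof. by rewrite codomE -map_comp. Qed.

Lemma divides_pointwise d d' n (t : basis r d n) (w : basis r d' n) :
  d <= d' -> (forall i, mle (mexp (t i)) (mexp (w i))) -> divides t w.
Proof. by move=> dd le; split=> //; apply: emb_map2. Qed.

Lemma divides_comp d n m (w : basis r d n) (f : 'I_m -> 'I_n) :
  {homo f : a b / a < b} -> divides [ffun i => w (f i)] w.
Proof.
move=> f_incr; split=> //.
have -> : word [ffun i => w (f i)] = map (fun i => mexp (w i)) (map f (enum 'I_m)).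
  by rewrite -map_comp; apply: eq_map => i; rewrite /= ffunE.
exact: emb_map_subseq _ (fun a j => leqnn (a j)) (subseq_increasing f_incr).
Qed.

Lemma divides_factor d n d' n' (t : basis r d n) (w : basis r d' n') :
  divides t w -> exists2 t' : basis r d' n,
    forall i, mle (mexp (t i)) (mexp (t' i)) & subseq (codom t') (codom w).
Proof.
case=> _; rewrite {1}/word word_codom => /emb_map_inv [s' sub [size_s' le]].
rewrite size_enum_ord in size_s' le.
(* A tuple rather than [nth] with a default: [mon r d'] is empty if [r = 0 < d']. *)
pose tup := Tuple (introT eqP size_s').
exists ([ffun i => tnth tup i] : basis r d' n) => [i|].
  rewrite ffunE (tnth_nth (tnth tup i)).
  by have := le i i (tnth tup i) (ltn_ord i); rewrite nth_ord_enum.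
by rewrite codomE (eq_map (ffunE _)) map_tnth_enum.
Qed.

Lemma basis_quotient d e n (t : basis r d n) (t' : basis r (e + d) n) :
  (forall i, mle (mexp (t i)) (mexp (t' i))) ->
  exists v : basis r e n, forall i j, mexp (t' i) j = mexp (v i) j + mexp (t i) j.
Proof.
move=> le.
have sum_diff i : \sum_j (mexp (t' i) j - mexp (t i) j) = e.
  by rewrite sumnB => [|j _]; [rewrite !mexp_sum addnK | exact: le].
pose a i : {ffun 'I_r -> 'I_e.+1} := [ffun j => inord (mexp (t' i) j - mexp (t i) j)].
have aE i j : a i j = mexp (t' i) j - mexp (t i) j :> nat.
  rewrite ffunE inordK // ltnS -[X in _ <= X](sum_diff i).
  by rewrite (bigD1 j) //= leq_addr.
have a_deg i : \sum_j (a i j : nat) == e.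
  by rewrite (eq_bigr _ (fun j _ => aE i j)) sum_diff.
pose v : basis r e n := [ffun i => exist _ (a i) (a_deg i)].
have vE i j : mexp (v i) j = a i j by rewrite /mexp ffunE.
by exists v => i j; rewrite vE aE subnK //; apply: le.
Qed.

End Divisibility.

(** * Monomials in ideals *)

Section MonomialsInIdeals.
Variables (k : comPzRingType) (r : nat).
Local Open Scope ring_scope.

Definition mono d n (c : k) (t : basis r d n) : comp k r d n :=
  [ffun w => if w == t then c else 0].

Lemma mono0 d n (t : basis r d n) : mono 0 t = 0.
Proof. by apply/ffunP => w; rewrite !ffunE; case: ifP. Qed.

Lemma monoD d n a b (t : basis r d n) : mono (a + b) t = mono a t + mono b t.
Proof. by apply/ffunP => w; rewrite !ffunE; case: ifP; rewrite ?addr0. Qed.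

Lemma monoM d n a b (t : basis r d n) : mono (a * b) t = cscale a (mono b t).
Proof. by apply/ffunP => w; rewrite !ffunE; case: ifP; rewrite ?mulr0. Qed.

Lemma sum_mono d n (F : comp k r d n) : \sum_w mono (F w) w = F.
Proof.
apply/ffunP => x; rewrite sum_ffunE (bigD1 x) //= ffunE eqxx big1 ?addr0 //.
by move=> w /negbTE xw; rewrite ffunE eq_sym xw.
Qed.

Lemma star_mul_mono d e n (v : basis r e n) c (t : basis r d n) (t' : basis r (e + d) n) :
  (forall i j, mexp (t' i) j = (mexp (v i) j + mexp (t i) j)%N) ->
  star_mul (mono 1 v) (mono c t) = mono c t'.
Proof.
move=> t'E; apply/ffunP => x; rewrite !ffunE.
rewrite (bigD1 v) //= [X in _ + X]big1 ?addr0; last first.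
  by move=> a /negbTE av; apply: big1 => b _; rewrite !ffunE av mul0r; case: ifP.
rewrite (bigD1 t) //= [X in _ + X]big1 ?addr0; last first.
  by move=> b /negbTE bt; rewrite !ffunE bt mulr0; case: ifP.
rewrite !ffunE !eqxx mul1r; congr (if _ then _ else _).
apply/forallP/eqP => [xE | -> i]; last by apply/forallP => j; rewrite -!/(mexp _ _) t'E.
apply: basis_ext => i j; rewrite t'E; exact/eqP/(forallP (xE i) j).
Qed.

Lemma is_split_lift n (p : 'I_n.+1) : is_split (fun _ : 'I_1 => p : 'I_(1 + n)) (lift p).
Proof.
split=> [[[|a] ?] [[|b] ?] // | a b ab | a b]; last exact: neq_lift.
by rewrite /= !ltnNge leq_bump2 -ltnNge.
Qed.

Lemma split_mul_lift d n (w : basis r d n.+1) (p : 'I_n.+1) c :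
  split_mul (fun _ : 'I_1 => p : 'I_(1 + n)) (lift p)
    (mono 1 [ffun _ => w p]) (mono c [ffun j => w (lift p j)]) = mono c w.
Proof.
apply/ffunP => x; rewrite !ffunE; case: (eqVneq x w) => [-> | xw].
  by rewrite !eqxx mul1r.
case: eqP => [xp|_]; last by rewrite mul0r.
case: eqP => [xl|_]; last by rewrite mulr0.
case/eqP: xw; apply/ffunP => i; case: (unliftP p i) => [j -> | ->].
  by have := congr1 (fun f : basis r d n => f j) xl; rewrite !ffunE.
by have := congr1 (fun f : basis r d 1 => f ord0) xp; rewrite !ffunE.
Qed.

Section IdealClosure.
Variable J : bisubset k r.
Arguments J : clear implicits.
Hypothesis J_ideal : is_ideal J.

Lemma ideal0 d n : J d n 0.
Proof. by case: J_ideal. Qed.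

Lemma idealD d n F G : J d n F -> J d n G -> J d n (F + G).
Proof. by case: J_ideal => _ JD _ _ _; apply: JD. Qed.

Lemma idealZ d n c F : J d n F -> J d n (cscale c F).
Proof. by case: J_ideal => _ _ JZ _ _; apply: JZ. Qed.

Lemma ideal_sum d n (I : finType) (F : I -> comp k r d n) :
  (forall i, J d n (F i)) -> J d n (\sum_i F i).
Proof. by move=> JF; apply: (big_ind (J d n)) => //; [exact: ideal0 | exact: idealD]. Qed.

Lemma ideal_mono_raise d e n c (t : basis r d n) (t' : basis r (e + d) n) :
  (forall i, mle (mexp (t i)) (mexp (t' i))) -> J d n (mono c t) -> J (e + d) n (mono c t').
Proof.
move=> /basis_quotient [v /star_mul_mono <-]; case: J_ideal => _ _ _ Jstar _.
exact: Jstar.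
Qed.

Lemma ideal_mono_lift d n c (w : basis r d n.+1) (p : 'I_n.+1) :
  J d n (mono c [ffun j => w (lift p j)]) -> J d n.+1 (mono c w).
Proof.
rewrite -(split_mul_lift w p c); case: J_ideal => _ _ _ _ Jsplit.
exact: Jsplit (is_split_lift p).
Qed.

Lemma ideal_mono_subseq d c n' (w : basis r d n') n (t : basis r d n) :
  subseq (codom t) (codom w) -> J d n (mono c t) -> J d n' (mono c w).
Proof.
have codom_inj m (x y : basis r d m) : codom x = codom y -> x = y.
  by rewrite !codom_ffun => xy; apply: (can_inj fgraphK); apply: val_inj.
elim: n' w => [|n' IH] w sub Jt.
  have := size_subseq sub; rewrite !size_codom !card_ord leqn0 => /eqP n0; subst n.
  by rewrite (_ : w = t) //; apply/ffunP => -[].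
have [lt | ge] := ltnP n n'.+1.
  have := subseq_drop_nth sub; rewrite !size_codom !card_ord => /(_ lt) [p pw subp].
  apply: (ideal_mono_lift (p := Ordinal pw)); apply: IH _ Jt.
  by rewrite (eq_codom (ffunE _)) (codom_lift w).
have := size_subseq_leqif sub; rewrite !size_codom !card_ord => -[le_nn'].
move: ge; rewrite leq_eqVlt ltnNge le_nn' orbF => /eqP nE; subst n.
by rewrite eqxx => /esym/eqP /codom_inj <-.
Qed.

Lemma ideal_mono_divides d n d' n' c (t : basis r d n) (w : basis r d' n') :
  divides t w -> J d n (mono c t) -> J d' n' (mono c w).
Proof.
move=> tw; have [t' le sub] := divides_factor tw; case: tw => dd _ Jt.
have dE : d' = (d' - d + d)%N by rewrite subnK.
move: (d' - d)%N dE => e dE; subst d'.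
exact: ideal_mono_subseq sub (ideal_mono_raise le Jt).
Qed.

End IdealClosure.
End MonomialsInIdeals.

(** * Ideals generated by monomials *)

Section Span.
Variable k : comPzRingType.
Local Open Scope ring_scope.
Implicit Types (P Q : k -> Prop) (x : k).

Inductive kspan P : k -> Prop :=
| kspan0 : kspan P 0
| kspan_cons a c x : P c -> kspan P x -> kspan P (a * c + x).

Lemma kspanD P x y : kspan P x -> kspan P y -> kspan P (x + y).
Proof.
elim=> [|a c x' Pc _ IH] Py; first by rewrite add0r.
by rewrite -addrA; apply: kspan_cons (IH Py).
Qed.

Lemma kspanMl P b x : kspan P x -> kspan P (b * x).
Proof.
elim=> [|a c x' Pc _ IH]; first by rewrite mulr0; apply: kspan0.
by rewrite mulrDr mulrA; apply: kspan_cons.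
Qed.

Lemma kspan_sum P (I : finType) (F : I -> k) :
  (forall i, kspan P (F i)) -> kspan P (\sum_i F i).
Proof. by move=> PF; apply: (big_ind (kspan P)) => //; [exact: kspan0 | exact: kspanD]. Qed.

Lemma kspan_gen P c : P c -> kspan P c.
Proof. by move=> Pc; rewrite -[c]addr0 -[c in c + _]mul1r; apply: kspan_cons (kspan0 _). Qed.

Lemma kspan_trans P Q x : (forall c, P c -> kspan Q c) -> kspan P x -> kspan Q x.
Proof.
move=> PQ; elim=> [|a c x' Pc _ IH]; first exact: kspan0.
exact/kspanD/IH/kspanMl/PQ.
Qed.

Lemma kspan_sub P Q x : (forall c, P c -> Q c) -> kspan P x -> kspan Q x.
Proof. by move=> PQ; apply: kspan_trans => c /PQ /kspan_gen. Qed.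

Lemma noetherian_stationary : noetherian k ->
  forall a : nat -> k, exists M, kspan (fun c => exists2 i, (i < M)%N & c = a i) (a M).
Proof.
move=> noeth a; pose K m := kspan (fun c => exists2 i, (i < m)%N & c = a i).
have K_mono m m' x : (m <= m')%N -> K m x -> K m' x.
  by move=> mm'; apply: kspan_sub => c [i im ->]; exists i => //; apply: leq_trans mm'.
pose Kall x := exists m, K m x.
have Kall_ideal : ring_ideal Kall.
  split=> [|x y [m1 Kx] [m2 Ky] | c x [m Kx]]; first by exists 0; apply: kspan0.
    exists (maxn m1 m2); apply: kspanD.
      exact: K_mono (leq_maxl _ _) Kx.
    exact: K_mono (leq_maxr _ _) Ky.
  by exists m; apply: kspanMl.
have [s sE] := noeth Kall Kall_ideal.
have /choice [m mK] (i : 'I_(size s)) : exists m, K m s`_i.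
  apply/sE; exists (fun j => if j == i then 1 else 0).
  rewrite (bigD1 i) //= eqxx mul1r big1 ?addr0 // => j /negbTE ->.
  by rewrite mul0r.
pose M := (\max_(i < size s) m i)%N; exists M.
have /sE [c ->] : Kall (a M) by exists M.+1; apply: kspan_gen; exists M.
by apply: kspan_sum => i; apply/kspanMl/(K_mono (m i)); [apply: leq_bigmax | apply: mK].
Qed.

End Span.

Section MonomialTerms.
Variables (k : comPzRingType) (r : nat).
Local Open Scope ring_scope.

Record term := Term { tdeg : nat; tlen : nat; tmon : basis r tdeg tlen; tcoef : k }.

Definition term_mono (g : term) : comp k r (tdeg g) (tlen g) := mono (tcoef g) (tmon g).

Definition divisor_coefs (S : term -> Prop) d n (w : basis r d n) : k -> Prop :=
  fun c => exists2 g, S g & tcoef g = c /\ divides (tmon g) w.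

Definition ideal_of_terms (S : term -> Prop) : bisubset k r :=
  fun d n F => forall w, kspan (divisor_coefs S w) (F w).

Lemma divisor_coefs_divides S d n d' n' (u : basis r d n) (w : basis r d' n') x :
  divides u w -> kspan (divisor_coefs S u) x -> kspan (divisor_coefs S w) x.
Proof.
move=> uw; apply: kspan_sub => c [g Sg [gc gu]].
by exists g => //; split=> //; apply: divides_trans gu uw.
Qed.

Lemma ideal_of_terms_ideal S : is_ideal (ideal_of_terms S).
Proof.
split.
- by move=> d n w; rewrite ffunE; apply: kspan0.
- by move=> d n F G FS GS w; rewrite ffunE; apply: kspanD.
- by move=> d n c F FS w; rewrite ffunE; apply: kspanMl.
- move=> d e n G F FS w; rewrite ffunE; apply: kspan_sum => t; apply: kspan_sum => u.
  case: ifP => [/forallP wE | _]; last exact: kspan0.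
  apply/kspanMl/(divisor_coefs_divides _ (FS u))/divides_pointwise; first exact: leq_addl.
  by move=> i j; rewrite /mexp (eqP (forallP (wE i) j)) leq_addl.
- move=> d n m ifun jfun G F [_ jfun_incr _] FS w; rewrite ffunE.
  exact/kspanMl/(divisor_coefs_divides _ (FS _))/divides_comp.
Qed.

Lemma term_mono_ideal_of_terms S g : S g -> ideal_of_terms S (term_mono g).
Proof.
move=> Sg w; rewrite ffunE; case: eqP => [-> | _]; last exact: kspan0.
apply: kspan_gen; exists g => //; split=> //.
exact: divides_pointwise (leqnn _) (fun i j => leqnn _).
Qed.

Lemma ideal_of_terms_min S (J : bisubset k r) : is_ideal J ->
  (forall g, S g -> J _ _ (term_mono g)) -> subset_of (ideal_of_terms S) J.
Proof.
move=> J_ideal JS d n F FS; rewrite -(sum_mono F); apply: ideal_sum => // w.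
elim: (FS w) => [|a c x [g Sg [<- gw]] _ IH]; first by rewrite mono0; apply: ideal0.
rewrite monoD monoM; apply: idealD => //; apply: idealZ => //.
exact: ideal_mono_divides gw (JS g Sg).
Qed.

Lemma ideal_of_terms_sub S S' :
  (forall g, S g -> kspan (divisor_coefs S' (tmon g)) (tcoef g)) ->
  subset_of (ideal_of_terms S) (ideal_of_terms S').
Proof.
move=> SS' d n F FS w; apply: kspan_trans (FS w) => c [g Sg [<- gw]].
exact: divisor_coefs_divides gw (SS' g Sg).
Qed.


Definition term_divides (g h : term) : Prop := divides (tmon g) (tmon h).

Lemma term_divides_trans : ptransitive term_divides.
Proof. by move=> h g g'; apply: divides_trans. Qed.

Lemma wqo_term_divides : wqo term_divides.
Proof.
apply: wqo_and; first exact: (wqo_preim (@tdeg) wqo_leq).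
  by move=> y x z; apply: leq_trans.
exact: (wqo_preim (fun g : term => word (tmon g)) (higman (@wqo_mle r) (@mle_trans r))).
Qed.

Lemma finite_cover S : noetherian k -> exists L : seq term,
  (forall g, List.In g L -> S g) /\
  forall g, S g -> kspan (divisor_coefs (fun h => List.In h L) (tmon g)) (tcoef g).
Proof.
move=> noeth; apply: NNPP => no_cover.
pose covers L g := kspan (divisor_coefs (fun h => List.In h L) (tmon g)) (tcoef g).
have [p p_new] : exists p : nat -> term, forall n,
    (forall h, List.In h (mkseq p n) -> S h) -> S (p n) /\ ~ covers (mkseq p n) (p n).
  apply: (greedy_seq (Q := fun L g =>
    (forall h, List.In h L -> S h) -> S g /\ ~ covers L g)).
  move=> L; case: (classic (forall h, List.In h L -> S h)) => [LS | notLS].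
    apply: NNPP => H; apply: no_cover; exists L; split=> // g Sg.
    by apply: NNPP => ng; apply: H; exists g.
  by exists (@Term 0 0 [ffun i => tnth [tuple] i] 0). (* vacuous: L is not contained in S *)
have prefix_S n h : List.In h (mkseq p n) -> S h.
  elim/ltn_ind: n h => n IH h /In_mkseq [i ilt ->].
  by have [] := p_new i (IH i ilt).
have [phi phi_incr phi_div] := wqo_chain wqo_term_divides term_divides_trans p.
have [M coefM] := noetherian_stationary noeth (fun i => tcoef (p (phi i))).
have [_ []] := p_new (phi M) (prefix_S _).
apply: kspan_sub coefM => c [i iM ->]; exists (p (phi i)).
  by apply/In_mkseq; exists (phi i) => //; apply: homo_ltn ltn_trans phi_incr _ _ iM.
by split=> //; apply: phi_div.
Qed.

End MonomialTerms.

Section GeneratingSets.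
Variables (k : comPzRingType) (r : nat).

Definition term_entry (g : term k r) : {d : nat & {n : nat & comp k r d n}} :=
  existT _ (tdeg g) (existT _ (tlen g) (term_mono g)).

Lemma of_seq_terms_mem L g : List.In g L -> of_seq (map term_entry L) (term_mono g).
Proof. by elim: L => //= h L IH [-> | /IH]; [left | right]. Qed.

Lemma of_seq_terms_sub L (Y : bisubset k r) :
  (forall g, List.In g L -> Y _ _ (term_mono g)) -> subset_of (of_seq (map term_entry L)) Y.
Proof.
move=> LY d n F.
pose P (x : {d : nat & {n : nat & comp k r d n}}) := Y _ _ (projT2 (projT2 x)).
suff : forall x, List.In x (map term_entry L) -> P x by apply.
elim: L LY => //= g L IH LY x [<- | /IH]; first exact: LY (or_introl _).
by apply=> h hL; apply: LY; right.
Qed.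

Lemma monomials_sub_ideal_of_terms (X : bisubset k r) :
  (forall d n F, X d n F -> is_monomial F) ->
  subset_of X (ideal_of_terms (fun g => X _ _ (term_mono g))).
Proof.
move=> X_mono d n F XF; have [c [t FE]] := X_mono d n F XF; subst F.
exact: (term_mono_ideal_of_terms (g := Term t c)).
Qed.

End GeneratingSets.

Theorem corollary2p5 (k : comPzRingType) (r : nat) :
  (0 < r)%N -> noetherian k ->
  forall I : bisubset k r, monomial_ideal I -> finitely_generated I.
Proof.
move=> _ noeth I [X [X_mono [I_ideal X_I I_min]]].
pose S (g : term k r) := X _ _ (term_mono g).
have [L [L_S L_cover]] := finite_cover S noeth.
exists (map (@term_entry k r) L); split=> // [|J J_ideal L_J d n F IF].
  by apply: of_seq_terms_sub => g /L_S /X_I.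
have /(ideal_of_terms_sub L_cover) : ideal_of_terms S F.
  exact: I_min (ideal_of_terms_ideal S) (monomials_sub_ideal_of_terms X_mono) _ _ _ IF.
by apply: ideal_of_terms_min => // g /of_seq_terms_mem /L_J.
Qed.
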